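(* The Schubert cell $S_{w_0,z_2}$ is the disjoint union of exactly four $G$-orbits of points $(P,Pw_0,Pz_2n)$: $n=n(0,1,1)$, dimension $8$, trivial stabilizer; $n=n(0,0,1)$, dimension $7$, stabilizer $\{d(1/a^2,a,a):a\in\mathbb{R}^\times\}$; $n=n(0,1,0)$, dimension $7$, stabilizer $\{d(a,1/a^2,a):a\in\mathbb{R}^\times\}$; $n=n(0,0,0)$, dimension $6$, stabilizer $D$.
   Context: $G=\mathrm{SL}_3(\mathbb{R})$, $P$ the upper triangular matrices in $G$, $D$ the diagonal matrices in $G$; $G$ acts on $X=(P\backslash G)^3$ by right multiplication in each coordinate. $n(x,y,z)=\begin{pmatrix}1&x&y\\0&1&z\\0&0&1\end{pmatrix}$, $d(a,b,c)=\operatorname{diag}(a,b,c)$. $w_0=\begin{pmatrix}0&0&-1\\0&-1&0\\-1&0&0\end{pmatrix}$, $z_2=\begin{pmatrix}0&0&1\\-1&0&0\\0&-1&0\end{pmatrix}$. $S_{v,w}=\big(\{P\}\times P\backslash PvP\times P\backslash PwP\big)\cdot G$. The stabilizer of $(P,Pv,Pwn)$ is $P\cap v^{-1}Pv\cap (wn)^{-1}P(wn)$. *)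

From HB Require Import structures.
From mathcomp Require Import all_boot all_order all_algebra.
From mathcomp Require Import reals.
Set Implicit Arguments. Unset Strict Implicit. Unset Printing Implicit Defensive.
Import Order.TTheory GRing.Theory Num.Theory.
Local Open Scope ring_scope.

Section Defs.
Variable R : realType.
Notation M3 := 'M[R]_3.

Definition inG (g : M3) : Prop := \det g = 1.
Definition upper (A : M3) : Prop := forall i j : 'I_3, (j < i)%N -> A i j = 0.
Definition inP (p : M3) : Prop := inG p /\ upper p.
Definition dmx (a b c : R) : M3 :=
  \matrix_(i < 3, j < 3)
    if i == j then (match nat_of_ord i with 0 => a | 1 => b | _ => c end) else 0.
Definition inD (h : M3) : Prop := exists a b c : R, a * b * c = 1 /\ h = dmx a b c.

Definition nmx (x y z : R) : M3 :=
  \matrix_(i < 3, j < 3)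
    match nat_of_ord i, nat_of_ord j with
    | 0, 1 => x | 0, 2 => y | 1, 2 => z
    | _, _ => if i == j then 1 else 0 end.

Definition w0 : M3 := \matrix_(i < 3, j < 3) if (i + j == 2)%N then -1 else 0.
Definition z2 : M3 :=
  \matrix_(i < 3, j < 3)
    match nat_of_ord i, nat_of_ord j with
    | 0, 2 => 1 | 1, 0 => -1 | 2, 1 => -1 | _, _ => 0 end.

(* Cosets P g, g in G: P g = P g'  iff  g' g^{-1} in P *)
Definition coset_eq (g g' : M3) : Prop := inP (g' *m invmx g).

(* A point of X = (P\G)^3 is represented by a triple of elements of G. *)
Definition triple := (M3 * M3 * M3)%type.
Definition t1 (x : triple) := x.1.1.
Definition t2 (x : triple) := x.1.2.
Definition t3 (x : triple) := x.2.
Definition in_X (x : triple) : Prop := [/\ inG (t1 x), inG (t2 x) & inG (t3 x)].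

Definition X_eq (x y : triple) : Prop :=
  [/\ coset_eq (t1 x) (t1 y), coset_eq (t2 x) (t2 y) & coset_eq (t3 x) (t3 y)].
Definition act (x : triple) (h : M3) : triple :=
  (t1 x *m h, t2 x *m h, t3 x *m h).

Definition same_orbit (x y : triple) : Prop :=
  exists h, inG h /\ X_eq (act x h) y.

Definition stab (x : triple) (h : M3) : Prop := inG h /\ X_eq (act x h) x.

(* S_{v,w} = ({P} x P\PvP x P\PwP) . G *)
Definition in_S (v w : M3) (x : triple) : Prop :=
  in_X x /\
  exists p q h, [/\ inP p, inP q, inG h & X_eq (act (1%:M, v *m p, w *m q) h) x].

(* Lie algebra of the stabilizer of x = (P g1, P g2, P g3), i.e. of
   the intersection of the g_i^{-1} P g_i:  Y in sl_3 with g_i Y g_i^{-1} in Lie(P) *)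
Definition lie_stab (x : triple) (Y : M3) : Prop :=
  [/\ \tr Y = 0, upper (t1 x *m Y *m invmx (t1 x)),
      upper (t2 x *m Y *m invmx (t2 x)) & upper (t3 x *m Y *m invmx (t3 x))].

(* the orbit x.G has dimension d : d = dim G - dim Stab = 8 - dim Lie(Stab) *)
Definition orbit_dim (x : triple) (d : nat) : Prop :=
  exists s : seq 'M[R]_(3, 3),
    [/\ free s, (size s + d = 8)%N & forall Y, lie_stab x Y <-> Y \in <<s>>%VS].
End Defs.

From HB Require Import structures.
From mathcomp Require Import all_boot all_order all_algebra.
From mathcomp Require Import reals ring lra polyrcf.
Import Order.TTheory GRing.Theory Num.Theory.
Local Open Scope ring_scope.
Set Implicit Arguments.
Unset Strict Implicit.
Unset Printing Implicit Defensive.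

(* An element h of G carries (P, P w0, P z2 n(0,y,z)) to (P, P w0, P z2 n(0,y',z'))
   only if h lies in P and in w0 P w0, i.e. h = d(a,b,c) is diagonal, and then
   exactly when y' a = y c and z' b = z c.  This gives the stabilizers, and shows
   that the vanishing pattern of (y, z) is an orbit invariant.  Conversely, a point
   of S_{w0,z2} is G-equivalent to (P, P w0, P z2 u) with u in P; writing
   u = u' n(0,y,z) with z2 u' z2^-1 in P and rescaling (y, z) by the torus brings
   (y, z) into {0,1}^2.  Linearizing the same computation, the Lie algebra of the
   stabilizer consists of the trace-zero d(p,q,r) with y p = y r and z q = z r. *)

Local Notation i0 := (@Ordinal 3 0 isT).
Local Notation i1 := (@Ordinal 3 1 isT).
Local Notation i2 := (@Ordinal 3 2 isT).

Ltac mx3_entries :=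
  apply/matrixP => -[[|[|[|?]]] ?] // -[[|[|[|?]]] ?] //; rewrite !mxE.

Section Mx3.
Variable R : comRingType.

Definition mx3 (a00 a01 a02 a10 a11 a12 a20 a21 a22 : R) : 'M[R]_3 :=
  \matrix_(i < 3, j < 3)
    match nat_of_ord i, nat_of_ord j with
    | 0, 0 => a00 | 0, 1 => a01 | 0, _ => a02
    | 1, 0 => a10 | 1, 1 => a11 | 1, _ => a12
    | _, 0 => a20 | _, 1 => a21 | _, _ => a22 end.

Lemma mx3E (A : 'M[R]_3) :
  A = mx3 (A i0 i0) (A i0 i1) (A i0 i2) (A i1 i0) (A i1 i1) (A i1 i2)
          (A i2 i0) (A i2 i1) (A i2 i2).
Proof. by mx3_entries; congr (A _ _); apply: val_inj. Qed.

Lemma mx3_ind (P : 'M[R]_3 -> Prop) :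
  (forall a00 a01 a02 a10 a11 a12 a20 a21 a22,
     P (mx3 a00 a01 a02 a10 a11 a12 a20 a21 a22)) ->
  forall A, P A.
Proof. by move=> PA A; rewrite (mx3E A). Qed.

Lemma mulmx_mx3 a00 a01 a02 a10 a11 a12 a20 a21 a22
                 b00 b01 b02 b10 b11 b12 b20 b21 b22 :
  mx3 a00 a01 a02 a10 a11 a12 a20 a21 a22 *m mx3 b00 b01 b02 b10 b11 b12 b20 b21 b22 =
  mx3 (a00*b00+a01*b10+a02*b20) (a00*b01+a01*b11+a02*b21) (a00*b02+a01*b12+a02*b22)
      (a10*b00+a11*b10+a12*b20) (a10*b01+a11*b11+a12*b21) (a10*b02+a11*b12+a12*b22)
      (a20*b00+a21*b10+a22*b20) (a20*b01+a21*b11+a22*b21) (a20*b02+a21*b12+a22*b22).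
Proof. by mx3_entries; rewrite !big_ord_recl big_ord0 !mxE addr0 addrA. Qed.

Lemma det_mx3 a00 a01 a02 a10 a11 a12 a20 a21 a22 :
  \det (mx3 a00 a01 a02 a10 a11 a12 a20 a21 a22) =
  a00 * (a11 * a22 - a12 * a21) - a01 * (a10 * a22 - a12 * a20)
  + a02 * (a10 * a21 - a11 * a20).
Proof.
rewrite (expand_det_row _ ord0) !big_ord_recl big_ord0 /cofactor.
rewrite !(expand_det_row _ ord0) !big_ord_recl !big_ord0 /cofactor !det_mx11 !mxE /=.
by rewrite /bump /=; ring.
Qed.

Lemma mxtrace_mx3 a00 a01 a02 a10 a11 a12 a20 a21 a22 :
  \tr (mx3 a00 a01 a02 a10 a11 a12 a20 a21 a22) = a00 + a11 + a22.
Proof. by rewrite /mxtrace !big_ord_recl big_ord0 !mxE /= addr0 addrA. Qed.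

Lemma trmx_mx3 a00 a01 a02 a10 a11 a12 a20 a21 a22 :
  (mx3 a00 a01 a02 a10 a11 a12 a20 a21 a22)^T =
  mx3 a00 a10 a20 a01 a11 a21 a02 a12 a22.
Proof. by mx3_entries. Qed.

End Mx3.

Lemma exists_cube_root (R : rcfType) (r : R) : exists c : R, c ^+ 3 = r.
Proof.
have [|c /rootP] := @odd_poly_root R ('X^3 - r%:P); first by rewrite size_XnsubC.
by rewrite !hornerE => /eqP; rewrite subr_eq0 => /eqP; exists c.
Qed.

Lemma expr3_eq1 (R : realDomainType) (c : R) : c ^+ 3 = 1 -> c = 1.
Proof.
move=> c3; have c_ge0 : 0 <= c by rewrite -(exprn_odd_ge0 (n := 3)) // c3.
by apply/eqP; rewrite -(pexpr_eq1 (n := 3)) // c3.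
Qed.

Lemma prod3_neq0 (R : idomainType) (a b c : R) :
  a * b * c = 1 -> [/\ a != 0, b != 0 & c != 0].
Proof.
move=> abc; have : a * b * c != 0 by rewrite abc oner_neq0.
by rewrite !mulf_eq0 !negb_or => /andP[/andP[-> ->] ->].
Qed.

Section SL3.
Variable R : realType.
Implicit Types (a b c y z : R) (g h k u : 'M[R]_3) (x : triple R).

Notation w0 := (w0 R).
Notation z2 := (z2 R).

Lemma idmxE : 1%:M = mx3 1 0 0 0 1 0 0 0 (1 : R).
Proof. by mx3_entries. Qed.
Lemma dmxE a b c : dmx a b c = mx3 a 0 0 0 b 0 0 0 c.
Proof. by mx3_entries. Qed.
Lemma nmxE (x : R) y z : nmx x y z = mx3 1 x y 0 1 z 0 0 1.
Proof. by mx3_entries. Qed.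
Lemma w0E : w0 = mx3 0 0 (-1) 0 (-1) 0 (-1) 0 0.
Proof. by mx3_entries. Qed.
Lemma z2E : z2 = mx3 0 0 1 (-1) 0 0 0 (-1) 0.
Proof. by mx3_entries. Qed.

Lemma upper_mx3 a00 a01 a02 a10 a11 a12 a20 a21 a22 :
  upper (mx3 a00 a01 a02 a10 a11 a12 a20 a21 a22) <->
  [/\ a10 = 0, a20 = 0 & a21 = 0].
Proof.
split; first by move=> U; move: (U i1 i0 isT) (U i2 i0 isT) (U i2 i1 isT); rewrite !mxE.
by case=> ? ? ? [[|[|[|i]]] ?] // [[|[|[|j]]] ?] //; rewrite mxE.
Qed.

Lemma upper1 : upper (1%:M : 'M[R]_3).
Proof. by rewrite idmxE upper_mx3. Qed.

Lemma upper_mul g h : upper g -> upper h -> upper (g *m h).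
Proof.
rewrite (mx3E g) (mx3E h) mulmx_mx3 !upper_mx3 => -[-> -> ->] [-> -> ->].
by split; ring.
Qed.

Lemma det_dmx a b c : \det (dmx a b c) = a * b * c.
Proof. by rewrite dmxE det_mx3; ring. Qed.

Lemma mulmx1_invmx g h : g *m h = 1%:M -> invmx g = h.
Proof.
move=> gh; have [Ug _] := mulmx1_unit gh.
by rewrite -[invmx g]mulmx1 -gh mulmxA mulVmx // mul1mx.
Qed.

(* For a unimodular upper triangular matrix the inverse is its adjugate. *)
Lemma invmx_upper_mx3 a b c d e f : a * d * f = 1 ->
  invmx (mx3 a b c 0 d e 0 0 f) =
  mx3 (d * f) (- b * f) (b * e - c * d) 0 (a * f) (- a * e) 0 0 (a * d).
Proof.
by move=> adf; apply: mulmx1_invmx; rewrite mulmx_mx3 idmxE; congr mx3; rewrite -?adf; ring.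
Qed.

Lemma inG_unitmx g : inG g -> g \in unitmx.
Proof. by rewrite unitmxE => ->; rewrite unitr1. Qed.

Lemma inG_mul g h : inG g -> inG h -> inG (g *m h).
Proof. by rewrite /inG det_mulmx => -> ->; rewrite mulr1. Qed.

Lemma invmx_mul g h : inG g -> inG h -> invmx (g *m h) = invmx h *m invmx g.
Proof.
move=> /inG_unitmx Ug /inG_unitmx Uh; apply: mulmx1_invmx.
by rewrite mulmxA -(mulmxA g) mulmxV // mulmx1 mulmxV.
Qed.

Lemma inG_invmx g : inG g -> inG (invmx g).
Proof. by rewrite /inG det_inv => ->; rewrite invr1. Qed.

Lemma inP1 : inP (1%:M : 'M[R]_3).
Proof. by split; [rewrite /inG det1 | exact: upper1]. Qed.

Lemma inP_mul g h : inP g -> inP h -> inP (g *m h).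
Proof. by move=> [? ?] [? ?]; split; [apply: inG_mul | apply: upper_mul]. Qed.

Lemma inP_invmx g : inP g -> inP (invmx g).
Proof.
move=> [Gg Ug]; split; first exact: inG_invmx.
elim/mx3_ind: g Gg Ug => a00 a01 a02 a10 a11 a12 a20 a21 a22.
rewrite /inG det_mx3 upper_mx3 => detg [a10_0 a20_0 a21_0]; subst.
by rewrite invmx_upper_mx3 ?upper_mx3 // -detg; ring.
Qed.

Lemma inP_dmx a b c : a * b * c = 1 -> inP (dmx a b c).
Proof. by move=> abc; split; [rewrite /inG det_dmx | rewrite dmxE upper_mx3]. Qed.

Lemma inG_w0 : inG w0. Proof. by rewrite /inG w0E det_mx3; ring. Qed.
Lemma inG_z2 : inG z2. Proof. by rewrite /inG z2E det_mx3; ring. Qed.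
Lemma inG_nmx (x : R) y z : inG (nmx x y z). Proof. by rewrite /inG nmxE det_mx3; ring. Qed.

Lemma invmx_w0 : invmx w0 = w0.
Proof. by apply: mulmx1_invmx; rewrite w0E mulmx_mx3 idmxE; congr mx3; ring. Qed.

Lemma invmx_z2 : invmx z2 = z2^T.
Proof.
by apply: mulmx1_invmx; rewrite z2E trmx_mx3 mulmx_mx3 idmxE; congr mx3; ring.
Qed.

Lemma invmx_nmx (x : R) y z : invmx (nmx x y z) = nmx (- x) (x * z - y) (- z).
Proof. by apply: mulmx1_invmx; rewrite !nmxE mulmx_mx3 idmxE; congr mx3; ring. Qed.

Lemma w0_dmx_conj a b c : w0 *m dmx a b c *m w0 = dmx c b a.
Proof. by rewrite w0E !dmxE !mulmx_mx3; congr mx3; ring. Qed.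

Lemma z2_dmx_conj a b c : z2 *m dmx a b c *m z2^T = dmx c a b.
Proof. by rewrite z2E trmx_mx3 !dmxE !mulmx_mx3; congr mx3; ring. Qed.

Lemma dmx_nmx_comm a b c y z y' z' : y' * a = y * c -> z' * b = z * c ->
  dmx a b c *m nmx 0 y' z' = nmx 0 y z *m dmx a b c.
Proof. by move=> ry rz; rewrite dmxE !nmxE !mulmx_mx3; congr mx3; lra. Qed.

Lemma z2_nmx_dmx_conj a b c y z y' z' :
  z2 *m nmx 0 y z *m dmx a b c *m invmx (z2 *m nmx 0 y' z') =
  mx3 c 0 0 (y' * a - y * c) a 0 (z' * b - z * c) 0 b.
Proof.
rewrite (invmx_mul inG_z2 (inG_nmx _ _ _)) invmx_nmx invmx_z2.
by rewrite z2E trmx_mx3 !nmxE dmxE !mulmx_mx3; congr mx3; ring.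
Qed.

Lemma upper_w0_conj g : upper g -> upper (w0 *m g *m w0) ->
  exists a b c, g = dmx a b c.
Proof.
elim/mx3_ind: g => a00 a01 a02 a10 a11 a12 a20 a21 a22.
rewrite w0E !mulmx_mx3 !upper_mx3 => -[-> -> ->] [a12_0 a02_0 a01_0].
by exists a00, a11, a22; rewrite dmxE; congr mx3; lra.
Qed.

Lemma coset_eq_sym g g' : inG g -> inG g' -> coset_eq g g' -> coset_eq g' g.
Proof.
move=> Gg Gg' /inP_invmx.
by rewrite /coset_eq (invmx_mul Gg' (inG_invmx Gg)) invmxK.
Qed.

Lemma coset_eq_trans g1 g2 g3 :
  inG g2 -> coset_eq g1 g2 -> coset_eq g2 g3 -> coset_eq g1 g3.
Proof.
move=> /inG_unitmx U2 P12 P23; rewrite /coset_eq.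
by rewrite -(mulmxKV U2 g3) -!mulmxA mulmxA; apply: inP_mul.
Qed.

Lemma coset_eq_mull g g' k : inG g -> inP k -> g' = k *m g -> coset_eq g g'.
Proof. by move=> /inG_unitmx Ug Pk ->; rewrite /coset_eq mulmxK. Qed.

Lemma coset_eq_mulr g g' h :
  inG g -> inG h -> coset_eq g g' -> coset_eq (g *m h) (g' *m h).
Proof.
move=> Gg Gh; rewrite /coset_eq (invmx_mul Gg Gh) mulmxA.
by rewrite mulmxK // inG_unitmx.
Qed.

Lemma in_X_act x h : in_X x -> inG h -> in_X (act x h).
Proof. by case=> ? ? ? Gh; split; apply: inG_mul. Qed.

Lemma X_eq_refl x : in_X x -> X_eq x x.
Proof.
have coset_eq_refl g : inG g -> coset_eq g g.
  by move=> /inG_unitmx Ug; rewrite /coset_eq mulmxV //; exact: inP1.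
by case=> ? ? ?; split; apply: coset_eq_refl.
Qed.

Lemma X_eq_sym x x' : in_X x -> in_X x' -> X_eq x x' -> X_eq x' x.
Proof. by case=> ? ? ? [? ? ?] [? ? ?]; split; apply: coset_eq_sym. Qed.

Lemma X_eq_trans x x' x'' : in_X x' -> X_eq x x' -> X_eq x' x'' -> X_eq x x''.
Proof.
move=> [G1 G2 G3] [E1 E2 E3] [F1 F2 F3].
by split; [exact: coset_eq_trans G1 E1 F1 | exact: coset_eq_trans G2 E2 F2
          | exact: coset_eq_trans G3 E3 F3].
Qed.

Lemma X_eq_act x x' h : in_X x -> inG h -> X_eq x x' -> X_eq (act x h) (act x' h).
Proof. by case=> ? ? ? Gh [? ? ?]; split; apply: coset_eq_mulr. Qed.

Lemma act_mul x g h : act (act x g) h = act x (g *m h).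
Proof. by rewrite /act /t1 /t2 /t3 /= !mulmxA. Qed.

Notation pt y z := ((1%:M, w0, z2 *m nmx 0 y z) : triple R).

Lemma inG_z2_nmx y z : inG (z2 *m nmx 0 y z).
Proof. exact: inG_mul inG_z2 (inG_nmx 0 y z). Qed.

Lemma in_X_pt y z : in_X (pt y z).
Proof. by split; [rewrite /inG det1 | exact: inG_w0 | exact: inG_z2_nmx]. Qed.

Lemma X_eq_pt_act y z y' z' h : X_eq (pt y' z') (act (pt y z) h) <->
  [/\ inP h, inP (w0 *m h *m w0)
    & inP (z2 *m nmx 0 y z *m h *m invmx (z2 *m nmx 0 y' z'))].
Proof. by rewrite /X_eq /coset_eq /act /t1 /t2 /t3 /= invmx1 !mulmx1 mul1mx invmx_w0. Qed.

Lemma transporter_pt y z y' z' h :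
  inG h /\ X_eq (act (pt y z) h) (pt y' z') <->
  exists a b c, [/\ a * b * c = 1, h = dmx a b c, y' * a = y * c & z' * b = z * c].
Proof.
have upper_conj a b c :
    upper (z2 *m nmx 0 y z *m dmx a b c *m invmx (z2 *m nmx 0 y' z')) <->
    y' * a = y * c /\ z' * b = z * c.
  by rewrite z2_nmx_dmx_conj upper_mx3; split=> [[? ? _] | [? ?]]; split; lra.
split.
- move=> [Gh /X_eq_sym]; rewrite X_eq_pt_act.
  move=> /(_ (in_X_act (in_X_pt _ _) Gh) (in_X_pt _ _)) [[_ Uh] [_ Uw] [_]].
  have [a [b [c dh]]] := upper_w0_conj Uh Uw; subst h.
  move: Gh; rewrite /inG det_dmx => abc /upper_conj[ry rz].
  by exists a, b, c.
- move=> [a [b [c [abc -> ry rz]]]].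
  have Gd : inG (dmx a b c) by rewrite /inG det_dmx.
  split=> //; apply: X_eq_sym; [exact: in_X_pt | exact: in_X_act (in_X_pt _ _) Gd |].
  rewrite X_eq_pt_act w0_dmx_conj; split; first exact: inP_dmx.
    by apply: inP_dmx; rewrite -abc; ring.
  split; last exact/upper_conj.
  exact: inG_mul (inG_mul (inG_z2_nmx _ _) Gd) (inG_invmx (inG_z2_nmx _ _)).
Qed.

Lemma same_orbit_pt y z y' z' : same_orbit (pt y z) (pt y' z') <->
  exists a b c, [/\ a * b * c = 1, y' * a = y * c & z' * b = z * c].
Proof.
split=> [[h /transporter_pt [a [b [c [abc _ ry rz]]]]] | [a [b [c [abc ry rz]]]]].
  by exists a, b, c.
by exists (dmx a b c); apply/transporter_pt; exists a, b, c.
Qed.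

Lemma same_orbit_pt_eq0 y z y' z' : same_orbit (pt y z) (pt y' z') ->
  (y' == 0) = (y == 0) /\ (z' == 0) = (z == 0).
Proof.
case/same_orbit_pt=> a [b [c [/prod3_neq0[a0 b0 c0] ry rz]]].
move: (congr1 (eq_op^~ 0) ry) (congr1 (eq_op^~ 0) rz).
by rewrite !mulf_eq0 (negbTE a0) (negbTE b0) (negbTE c0) !orbF.
Qed.

(* [inP (z2 *m u' *m z2^T)] says that u' lies in P and in z2^-1 P z2, i.e. is upper
   triangular with u'_02 = u'_12 = 0. *)
Lemma inP_factor_nmx u : inP u ->
  exists u' y z, inP (z2 *m u' *m z2^T) /\ u = u' *m nmx 0 y z.
Proof.
elim/mx3_ind: u => a00 a01 a02 a10 a11 a12 a20 a21 a22.
rewrite /inP /inG det_mx3 upper_mx3 => -[+ [a10_0 a20_0 a21_0]]; subst.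
rewrite !(mul0r, mulr0, subr0, addr0) => det1.
have [a00_0 a11_0 a22_0] : [/\ a00 != 0, a11 != 0 & a22 != 0].
  by apply: prod3_neq0; rewrite -det1; ring.
exists (mx3 a00 a01 0 0 a11 0 0 0 a22), ((a02 - a01 * (a12 / a11)) / a00), (a12 / a11).
split; last by rewrite nmxE mulmx_mx3; congr mx3; field; rewrite ?a00_0 ?a11_0.
rewrite z2E trmx_mx3 !mulmx_mx3; split; last by rewrite upper_mx3; split; ring.
by rewrite /inG det_mx3 -[RHS]det1; ring.
Qed.

(* The torus rescales (y, z) to (y c / a, z c / b); normalizing two nonzero entries
   to 1 requires a cube root, c ^+ 3 = y z. *)
Lemma torus_normal_form y z : exists (bY bZ : bool) a b c,
  [/\ a * b * c = 1, y * a = bY%:R * c & z * b = bZ%:R * c].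
Proof.
have [-> | y0] := eqVneq y 0; have [-> | z0] := eqVneq z 0.
- by exists false, false, 1, 1, 1; split=> /=; ring.
- by exists false, true, z, z^-1, 1; split=> /=; field.
- by exists true, false, y^-1, y, 1; split=> /=; field.
- have [c c3] := exists_cube_root (y * z).
  have c0 : c != 0 by move: (mulf_neq0 y0 z0); rewrite -c3 expf_eq0.
  exists true, true, (c / y), (c / z), c; split=> /=; try by field; rewrite ?y0 ?z0.
  transitivity (c ^+ 3 / (y * z)); first by field; rewrite ?y0 ?z0.
  by rewrite c3 divff // mulf_neq0.
Qed.

Lemma z2_upper_normal_form u : inP u -> exists (bY bZ : bool) a b c k,
  [/\ a * b * c = 1, inP k & z2 *m u = k *m (z2 *m nmx 0 bY%:R bZ%:R *m dmx a b c)].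
Proof.
move=> /inP_factor_nmx[u' [y [z [Pu' ->]]]].
have [bY [bZ [a [b [c [abc ry rz]]]]]] := torus_normal_form y z.
have [a0 b0 c0] := prod3_neq0 abc.
have z2Tz2 : z2^T *m z2 = 1%:M by rewrite -invmx_z2 mulVmx //; exact: inG_unitmx inG_z2.
have dVd : dmx a^-1 b^-1 c^-1 *m dmx a b c = 1%:M.
  by rewrite !dmxE mulmx_mx3 idmxE; congr mx3; field.
exists bY, bZ, a, b, c, (z2 *m u' *m z2^T *m dmx c^-1 a^-1 b^-1); split=> //.
  apply: inP_mul Pu' (inP_dmx _).
  by rewrite -[RHS]invr1 -abc; field; rewrite ?a0 ?b0 ?c0.
rewrite -z2_dmx_conj !mulmxA -(mulmxA _ z2^T z2) z2Tz2 mulmx1.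
rewrite -(mulmxA _ z2^T z2) z2Tz2 mulmx1 -!mulmxA -(dmx_nmx_comm ry rz).
by rewrite (mulmxA (dmx _ _ _)) dVd mul1mx.
Qed.

Lemma not_same_orbit_pt y z y' z' :
  ((y' == 0) != (y == 0)) || ((z' == 0) != (z == 0)) ->
  ~ same_orbit (pt y z) (pt y' z').
Proof. by move=> neq /same_orbit_pt_eq0[ey ez]; move: neq; rewrite ey ez !eqxx. Qed.

Lemma in_S_pt y z : in_S w0 z2 (pt y z).
Proof.
split; first exact: in_X_pt.
exists 1%:M, (nmx 0 y z), 1%:M; split; [exact: inP1 | | by rewrite /inG det1 |].
  by split; [exact: inG_nmx | rewrite nmxE upper_mx3].
by rewrite /act /t1 /t2 /t3 /= !mulmx1; apply/X_eq_refl/in_X_pt.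
Qed.

Lemma in_S_cover x : in_S w0 z2 x -> exists bY bZ : bool, same_orbit (pt bY%:R bZ%:R) x.
Proof.
move=> [Xx [p [q [h [Pp Pq Gh Eh]]]]].
have [bY [bZ [a [b [c [k [abc Pk Ek]]]]]]] := z2_upper_normal_form (inP_mul Pq (inP_invmx Pp)).
have [a0 b0 c0] := prod3_neq0 abc.
have [[Gp _] [Gq _]] := (Pp, Pq).
have Gd : inG (dmx a b c) by rewrite /inG det_dmx.
have Gdp : inG (dmx a b c *m p) := inG_mul Gd Gp.
have X0 : in_X (1%:M, w0 *m p, z2 *m q).
  by split; [rewrite /inG det1 | apply: inG_mul inG_w0 Gp | apply: inG_mul inG_z2 Gq].
have E0 : X_eq (act (pt bY%:R bZ%:R) (dmx a b c *m p)) (1%:M, w0 *m p, z2 *m q).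
  rewrite /act /t1 /t2 /t3 /= mul1mx; split=> /=.
  - apply: (coset_eq_mull Gdp (inP_invmx (inP_mul (inP_dmx abc) Pp))).
    by rewrite mulVmx // inG_unitmx.
  - have Pd' : inP (dmx c^-1 b^-1 a^-1).
      by apply: inP_dmx; rewrite -[RHS]invr1 -abc; field; rewrite ?a0 ?b0 ?c0.
    apply: (coset_eq_mull (inG_mul inG_w0 Gdp) Pd').
    rewrite !mulmxA; congr (_ *m p).
    by rewrite w0E !dmxE !mulmx_mx3; congr mx3; field.
  - apply: (coset_eq_mull (inG_mul (inG_z2_nmx _ _) Gdp) Pk).
    by rewrite -(mulmxKV (inG_unitmx Gp) q) !mulmxA -(mulmxA z2) Ek !mulmxA.
exists bY, bZ, (dmx a b c *m p *m h); split; first exact: inG_mul Gdp Gh.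
apply: (X_eq_trans (in_X_act X0 Gh) _ Eh).
rewrite -act_mul.
exact: (X_eq_act (in_X_act (in_X_pt _ _) Gdp) Gh E0).
Qed.

Lemma lie_stab_pt y z Y : lie_stab (pt y z) Y <->
  exists p q r, [/\ p + q + r = 0, Y = dmx p q r, y * p = y * r & z * q = z * r].
Proof.
rewrite /lie_stab /t1 /t2 /t3 /= invmx1 mulmx1 mul1mx invmx_w0.
split=> [[trY UY UwY] | [p [q [r [trY -> ry rz]]]]].
  have [p [q [r dY]]] := upper_w0_conj UY UwY; subst Y.
  rewrite z2_nmx_dmx_conj upper_mx3 => -[ry rz _].
  by exists p, q, r; split=> //; [rewrite dmxE mxtrace_mx3 in trY | lra | lra].
split; first by rewrite dmxE mxtrace_mx3.
- by rewrite dmxE upper_mx3.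
- by rewrite w0_dmx_conj dmxE upper_mx3.
- by rewrite z2_nmx_dmx_conj upper_mx3; split=> //; lra.
Qed.

Lemma dmx0 : dmx 0 0 0 = 0 :> 'M[R]_3.
Proof. by mx3_entries. Qed.

Lemma dmxZ (s : R) a b c : s *: dmx a b c = dmx (s * a) (s * b) (s * c).
Proof. by mx3_entries; rewrite ?mulr0. Qed.

Lemma dmxD a b c a' b' c' : dmx a b c + dmx a' b' c' = dmx (a + a') (b + b') (c + c').
Proof. by mx3_entries; rewrite ?addr0. Qed.

Lemma dmx_inj a b c a' b' c' :
  dmx a b c = dmx a' b' c' -> [/\ a = a', b = b' & c = c'].
Proof. by move/matrixP=> E; move: (E i0 i0) (E i1 i1) (E i2 i2); rewrite !mxE. Qed.

Lemma orbit_dim_pt11 : orbit_dim (pt 1 1) 8.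
Proof.
exists [::]; split=> // [|Y]; first exact: nil_free.
rewrite lie_stab_pt span_nil memv0; split=> [[p [q [r [trY -> ry rz]]]] | /eqP->].
  by apply/eqP; rewrite -dmx0; congr dmx; lra.
by exists 0, 0, 0; rewrite dmx0; split=> //; ring.
Qed.

Lemma orbit_dim_pt01 : orbit_dim (pt 0 1) 7.
Proof.
exists [:: dmx (-2) 1 1]; split=> // [|Y].
  by rewrite seq1_free -dmx0; apply/eqP => /dmx_inj[_ /eqP]; rewrite oner_eq0.
rewrite lie_stab_pt span_seq1; split=> [[p [q [r [trY -> _ rz]]]] | /vlineP[s ->]].
  by apply/vlineP; exists q; rewrite dmxZ; congr dmx; lra.
by exists (s * -2), (s * 1), (s * 1); rewrite dmxZ; split=> //; ring.
Qed.

Lemma orbit_dim_pt10 : orbit_dim (pt 1 0) 7.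
Proof.
exists [:: dmx 1 (-2) 1]; split=> // [|Y].
  by rewrite seq1_free -dmx0; apply/eqP => /dmx_inj[/eqP]; rewrite oner_eq0.
rewrite lie_stab_pt span_seq1; split=> [[p [q [r [trY -> ry _]]]] | /vlineP[s ->]].
  by apply/vlineP; exists p; rewrite dmxZ; congr dmx; lra.
by exists (s * 1), (s * -2), (s * 1); rewrite dmxZ; split=> //; ring.
Qed.

Lemma orbit_dim_pt00 : orbit_dim (pt 0 0) 6.
Proof.
exists [:: dmx 1 (-1) 0; dmx 0 1 (-1)]; split=> // [|Y].
  rewrite free_cons seq1_free span_seq1 -dmx0; apply/andP; split.
    by apply/vlineP => -[s]; rewrite dmxZ => /dmx_inj[/eqP]; rewrite mulr0 oner_eq0.
  by apply/eqP => /dmx_inj[_ /eqP]; rewrite oner_eq0.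
rewrite lie_stab_pt span_cons span_seq1.
split=> [[p [q [r [trY -> _ _]]]] | /memv_addP[_ /vlineP[s ->] [_ /vlineP[t ->] ->]]].
  apply/memv_addP; exists (p *: dmx 1 (-1) 0); first exact/memvZ/memv_line.
  exists ((p + q) *: dmx 0 1 (-1)); first exact/memvZ/memv_line.
  by rewrite !dmxZ dmxD; congr dmx; lra.
by exists s, (t - s), (- t); rewrite !dmxZ dmxD; split; [ring | congr dmx; ring | ring | ring].
Qed.

Lemma stab_pt11 h : stab (pt 1 1) h <-> h = 1%:M.
Proof.
rewrite /stab transporter_pt; split=> [[a [b [c [abc -> ra rb]]]] | ->].
  rewrite !mul1r in ra rb; subst a b.
  have c1 : c = 1 by apply: expr3_eq1; rewrite -abc; ring.
  by rewrite c1 dmxE idmxE.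
by exists 1, 1, 1; rewrite dmxE idmxE; split=> //; ring.
Qed.

Lemma stab_pt01 h : stab (pt 0 1) h <->
  exists a : R, a != 0 /\ h = dmx (1 / a ^+ 2) a a.
Proof.
rewrite /stab transporter_pt; split=> [[a [b [c [abc -> _ rb]]]] | [a [a0 ->]]].
  rewrite !mul1r in rb; subst b; have [a0 _ c0] := prod3_neq0 abc.
  by exists c; split=> //; congr dmx; rewrite -abc; field.
by exists (1 / a ^+ 2), a, a; split=> //; [field | ring].
Qed.

Lemma stab_pt10 h : stab (pt 1 0) h <->
  exists a : R, a != 0 /\ h = dmx a (1 / a ^+ 2) a.
Proof.
rewrite /stab transporter_pt; split=> [[a [b [c [abc -> ra _]]]] | [a [a0 ->]]].
  rewrite !mul1r in ra; subst a; have [c0 b0 _] := prod3_neq0 abc.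
  by exists c; split=> //; congr dmx; rewrite -abc; field.
by exists a, (1 / a ^+ 2), a; split=> //; [field | ring].
Qed.

Lemma stab_pt00 h : stab (pt 0 0) h <-> inD h.
Proof.
rewrite /stab transporter_pt.
split=> [[a [b [c [abc -> _ _]]]] | [a [b [c [abc ->]]]]]; first by exists a, b, c.
by exists a, b, c; split=> //; ring.
Qed.

End SL3.

Theorem mainTheorem7 (R : realType) :
  let x1 : triple R := (1%:M, w0 R, z2 R *m nmx 0 1 1) in
  let x2 : triple R := (1%:M, w0 R, z2 R *m nmx 0 0 1) in
  let x3 : triple R := (1%:M, w0 R, z2 R *m nmx 0 1 0) in
  let x4 : triple R := (1%:M, w0 R, z2 R *m nmx 0 0 0) in
  (* the four points lie in S_{w0,z2} *)
  [/\ in_S (w0 R) (z2 R) x1, in_S (w0 R) (z2 R) x2,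
      in_S (w0 R) (z2 R) x3 & in_S (w0 R) (z2 R) x4] /\
  (* S_{w0,z2} is covered by their orbits *)
  (forall x, in_S (w0 R) (z2 R) x ->
     [\/ same_orbit x1 x, same_orbit x2 x, same_orbit x3 x | same_orbit x4 x]) /\
  (* the four orbits are pairwise distinct (hence disjoint) *)
  (~ same_orbit x1 x2 /\ ~ same_orbit x1 x3 /\ ~ same_orbit x1 x4 /\
   ~ same_orbit x2 x3 /\ ~ same_orbit x2 x4 /\ ~ same_orbit x3 x4) /\
  (* dimensions *)
  [/\ orbit_dim x1 8, orbit_dim x2 7, orbit_dim x3 7 & orbit_dim x4 6] /\
  (* stabilizers *)
  [/\ (forall h, stab x1 h <-> h = 1%:M),
      (forall h, stab x2 h <-> exists a : R, a != 0 /\ h = dmx (1 / a ^+ 2) a a),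
      (forall h, stab x3 h <-> exists a : R, a != 0 /\ h = dmx a (1 / a ^+ 2) a) &
      (forall h, stab x4 h <-> inD h)].
Proof.
move=> x1 x2 x3 x4; split; first by split; apply: in_S_pt.
split.
  move=> x /in_S_cover[[] [[] Ex]].
  - by constructor 1.
  - by constructor 3.
  - by constructor 2.
  - by constructor 4.
split.
  by do !split; apply: not_same_orbit_pt; rewrite !eqxx oner_eq0.
split; first by split; [exact: orbit_dim_pt11 | exact: orbit_dim_pt01
                       | exact: orbit_dim_pt10 | exact: orbit_dim_pt00].
by split; [exact: stab_pt11 | exact: stab_pt01 | exact: stab_pt10 | exact: stab_pt00].
Qed.
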